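(* Let $H$ be a finite-dimensional Hopf algebra over a field $\Bbbk$. Suppose $|G(H^* )|\neq1$, $G(H^* )\cap Z(H^* )=\{1\}$, $G(H)\cap Z(H)=\{1\}$, and there exists an odd prime $p$ dividing $|G(H^* )|$ such that $\alpha(g)\neq1$ for every $g\in G(H)$ of order $p$ and every $\alpha\in G(H^* )$ of order $p$. Then $H$ admits no universal $R$-matrix, i.e. there is no $R$ making $(H,R)$ quasitriangular.
   Context: A universal $R$-matrix for $H$ is an invertible $R\in H\otimes H$ with $(\Delta\otimes\mathrm{id})(R)=R_{13}R_{23}$, $(\mathrm{id}\otimes\Delta)(R)=R_{13}R_{12}$, $\tau\Delta(h)=R\Delta(h)R^{-1}$ for all $h$. $G(B)$ denotes the group of group-like elements of a Hopf algebra $B$ and $Z(B)$ its center; $H^*$ is the dual Hopf algebra. *)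

(* A finite-dimensional Hopf algebra over a field k is
   presented by structure constants with respect to a basis e_0..e_{n-1}. *)
From mathcomp Require Import all_boot all_order all_algebra.
Set Implicit Arguments. Unset Strict Implicit. Unset Printing Implicit Defensive.
Import GRing.Theory.
Local Open Scope ring_scope.

Section HopfDefs.
Variables (k : fieldType) (n : nat).

(* Elements of H are coordinate row vectors w.r.t. the basis e_i. *)
Record hopf_data := HopfData {
  hmu : 'I_n -> 'I_n -> 'rV[k]_n;
  hone : 'rV[k]_n;
  hdelta : 'I_n -> 'I_n -> 'I_n -> k;    (* Delta(e_i) = sum_{a,b} hdelta i a b e_a (x) e_b *)
  heps : 'I_n -> k;
  hS : 'I_n -> 'rV[k]_n
}.

Definition bvec (i : 'I_n) : 'rV[k]_n := delta_mx 0 i.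

(* tensors in H(x)H and H(x)H(x)H, by coefficients in the product basis *)
Definition tensor2 := 'I_n -> 'I_n -> k.
Definition tensor3 := 'I_n -> 'I_n -> 'I_n -> k.
Definition teq2 (T U : tensor2) := forall a b, T a b = U a b.
Definition teq3 (T U : tensor3) := forall a b c, T a b c = U a b c.
Definition tpure2 (x y : 'rV[k]_n) : tensor2 := fun a b => x 0 a * y 0 b.

Section Ops.
Variable H : hopf_data.

Definition hmul (x y : 'rV[k]_n) : 'rV[k]_n :=
  \sum_i \sum_j (x 0 i * y 0 j) *: hmu H i j.
Definition hDelta (x : 'rV[k]_n) : tensor2 :=
  fun a b => \sum_i x 0 i * hdelta H i a b.
Definition hcounit (x : 'rV[k]_n) : k := \sum_i x 0 i * heps H i.
Definition hanti (x : 'rV[k]_n) : 'rV[k]_n := \sum_i x 0 i *: hS H i.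

Definition tmul2 (T U : tensor2) : tensor2 := fun a b =>
  \sum_i \sum_j \sum_i' \sum_j'
     T i j * U i' j' * (hmu H i i' 0 a * hmu H j j' 0 b).
Definition tmul3 (T U : tensor3) : tensor3 := fun a b c =>
  \sum_i \sum_j \sum_l \sum_i' \sum_j' \sum_l'
     T i j l * U i' j' l' * (hmu H i i' 0 a * hmu H j j' 0 b * hmu H l l' 0 c).

Definition is_hopf : Prop :=
  (forall x y z, hmul (hmul x y) z = hmul x (hmul y z)) /\
  (forall x, hmul (hone H) x = x /\ hmul x (hone H) = x) /\
  (forall i a b c, \sum_j hdelta H i j c * hdelta H j a b
                   = \sum_l hdelta H i a l * hdelta H l b c) /\
  (forall i b, \sum_j heps H j * hdelta H i j b = (i == b)%:R) /\
  (forall i a, \sum_l hdelta H i a l * heps H l = (i == a)%:R) /\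
  (forall x y, teq2 (hDelta (hmul x y)) (tmul2 (hDelta x) (hDelta y))) /\
  teq2 (hDelta (hone H)) (tpure2 (hone H) (hone H)) /\
  (forall x y, hcounit (hmul x y) = hcounit x * hcounit y) /\
  hcounit (hone H) = 1 /\
  (forall x, \sum_a \sum_b hDelta x a b *: hmul (hanti (bvec a)) (bvec b)
             = hcounit x *: hone H) /\
  (forall x, \sum_a \sum_b hDelta x a b *: hmul (bvec a) (hanti (bvec b))
             = hcounit x *: hone H).

Definition grouplike (g : 'rV[k]_n) : Prop :=
  g != 0 /\ teq2 (hDelta g) (tpure2 g g).
Definition central (g : 'rV[k]_n) : Prop := forall x, hmul g x = hmul x g.
Definition hpow (g : 'rV[k]_n) (m : nat) : 'rV[k]_n := iter m (hmul g) (hone H).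
Definition has_order (g : 'rV[k]_n) (m : nat) : Prop :=
  (0 < m)%N /\ hpow g m = hone H /\
  (forall j, (0 < j)%N -> (j < m)%N -> hpow g j != hone H).
Definition dvd_card_grouplike (p : nat) : Prop :=
  exists s : seq 'rV[k]_n, uniq s /\ (forall x, x \in s <-> grouplike x) /\ (p %| size s)%N.

Definition is_universal_R (R : tensor2) : Prop :=
  exists Rinv : tensor2,
    teq2 (tmul2 R Rinv) (tpure2 (hone H) (hone H)) /\
    teq2 (tmul2 Rinv R) (tpure2 (hone H) (hone H)) /\
    teq3 (fun a b c => \sum_i R i c * hdelta H i a b)
         (tmul3 (fun a b c => R a c * hone H 0 b) (fun a b c => hone H 0 a * R b c)) /\
    teq3 (fun a b c => \sum_j R a j * hdelta H j b c)
         (tmul3 (fun a b c => R a c * hone H 0 b) (fun a b c => R a b * hone H 0 c)) /\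
    (forall x, teq2 (fun a b => hDelta x b a) (tmul2 (tmul2 R (hDelta x)) Rinv)).

End Ops.

(* The dual Hopf algebra H^*, w.r.t. the dual basis e^i. *)
Definition hdual (H : hopf_data) : hopf_data :=
  HopfData (fun i j => \row_a hdelta H a i j)
           (\row_a heps H a)
           (fun i j l => hmu H j l 0 i)
           (fun i => hone H 0 i)
           (fun i => \row_a hS H a 0 i).

Definition hpair (alpha x : 'rV[k]_n) : k := \sum_i alpha 0 i * x 0 i.

End HopfDefs.

(* For a group-like alpha of H^*, the legs g = (alpha ⊗ id)(R) and
   h = (id ⊗ alpha)(R) of an R-matrix are group-likes of H, and alpha |-> g is
   a group map.  Conjugation by g (resp. h) exchanges the left and right hit
   actions of alpha, so when alpha has finite order g h is a central
   group-like, hence g h = 1.  If g^j = 1 then alpha^j is central in H^*, so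
   g has the same order p as alpha.  Now alpha(g) = alpha(h) and g h = 1 give
   alpha(g)^2 = 1, while alpha(g)^p = 1 with p odd, so alpha(g) = 1.  An alpha
   of order p exists by Cauchy's theorem for the regular action of G(H^* ) on
   itself. *)
From mathcomp Require Import all_boot all_order all_algebra all_fingroup all_solvable ring.
From Stdlib Require Import Setoid Morphisms.
Set Implicit Arguments. Unset Strict Implicit. Unset Printing Implicit Defensive.
Import GRing.Theory.
Local Open Scope ring_scope.

(* Lets [setoid_rewrite] rewrite under the binders of big operators. *)
#[export] Instance bigop_pointwise_proper (R I : Type) (idx : R) (r : seq I) :
  Proper (pointwise_relation I eq ==> eq) (@bigop R I idx r).
Proof. move=> f g fg; rewrite unlock /reducebig; elim: r => //= x r ->; by rewrite fg. Qed.

Ltac distr_sums := repeat (setoid_rewrite mulr_suml || setoid_rewrite mulr_sumr).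

Section NestedSums.
Variables (R : pzSemiRingType) (I : finType).

Lemma sum_delta_mull (i : I) (F : I -> R) : \sum_j (j == i)%:R * F j = F i.
Proof.
rewrite (bigD1 i) //= eqxx mul1r big1 ?addr0 // => j /negPf ->; by rewrite mul0r.
Qed.

Lemma sum_delta_mulr (i : I) (F : I -> R) : \sum_j F j * (j == i)%:R = F i.
Proof.
rewrite (bigD1 i) //= eqxx mulr1 big1 ?addr0 // => j /negPf ->; by rewrite mulr0.
Qed.

Lemma sum_delta_mulr_sym (i : I) (F : I -> R) : \sum_j F j * (i == j)%:R = F i.
Proof. rewrite -[RHS](sum_delta_mulr i); apply: eq_bigr => j _; by rewrite eq_sym. Qed.

Lemma exchange_mulr_sum1 (f : I -> R) (J : finType) (G : I -> J -> R) :
  \sum_a f a * \sum_i G a i = \sum_i \sum_a f a * G a i.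
Proof. under eq_bigr do rewrite mulr_sumr; exact: exchange_big. Qed.

Lemma exchange_mulr_sum2 (f : I -> R) (J1 J2 : finType) (G : I -> J1 -> J2 -> R) :
  \sum_a f a * \sum_i \sum_j G a i j = \sum_i \sum_j \sum_a f a * G a i j.
Proof. rewrite exchange_mulr_sum1; apply: eq_bigr => i _; exact: exchange_mulr_sum1. Qed.

Lemma exchange_mulr_sum3 (f : I -> R) (J1 J2 J3 : finType) (G : I -> J1 -> J2 -> J3 -> R) :
  \sum_a f a * \sum_i \sum_j \sum_l G a i j l =
  \sum_i \sum_j \sum_l \sum_a f a * G a i j l.
Proof. rewrite exchange_mulr_sum1; apply: eq_bigr => i _; exact: exchange_mulr_sum2. Qed.

Lemma exchange_mulr_sum4 (f : I -> R) (J1 J2 J3 J4 : finType)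
  (G : I -> J1 -> J2 -> J3 -> J4 -> R) :
  \sum_a f a * \sum_i \sum_j \sum_l \sum_m G a i j l m =
  \sum_i \sum_j \sum_l \sum_m \sum_a f a * G a i j l m.
Proof. rewrite exchange_mulr_sum1; apply: eq_bigr => i _; exact: exchange_mulr_sum3. Qed.

Lemma exchange_mulr_sum5 (f : I -> R) (J1 J2 J3 J4 J5 : finType)
  (G : I -> J1 -> J2 -> J3 -> J4 -> J5 -> R) :
  \sum_a f a * \sum_i \sum_j \sum_l \sum_m \sum_o G a i j l m o =
  \sum_i \sum_j \sum_l \sum_m \sum_o \sum_a f a * G a i j l m o.
Proof. rewrite exchange_mulr_sum1; apply: eq_bigr => i _; exact: exchange_mulr_sum4. Qed.

Lemma exchange_mulr_sum6 (f : I -> R) (J1 J2 J3 J4 J5 J6 : finType)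
  (G : I -> J1 -> J2 -> J3 -> J4 -> J5 -> J6 -> R) :
  \sum_a f a * \sum_i \sum_j \sum_l \sum_m \sum_o \sum_q G a i j l m o q =
  \sum_i \sum_j \sum_l \sum_m \sum_o \sum_q \sum_a f a * G a i j l m o q.
Proof. rewrite exchange_mulr_sum1; apply: eq_bigr => i _; exact: exchange_mulr_sum5. Qed.

Lemma mulr_sum2 (J : finType) (F : I -> R) (G : J -> R) :
  (\sum_i F i) * (\sum_j G j) = \sum_i \sum_j F i * G j.
Proof. rewrite mulr_suml; apply: eq_bigr => i _; by rewrite mulr_sumr. Qed.

Lemma mulr_sum2_mulr (J : finType) (F : I -> R) (G : J -> R) x :
  (\sum_i F i) * (\sum_j G j) * x = \sum_i \sum_j F i * G j * x.
Proof. rewrite mulr_sum2 mulr_suml; apply: eq_bigr => i _; by rewrite mulr_suml. Qed.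

Lemma exchange_big_last2 (A B X : finType) (F : A -> B -> X -> R) :
  \sum_a \sum_b \sum_x F a b x = \sum_x \sum_a \sum_b F a b x.
Proof. under eq_bigr do rewrite exchange_big; exact: exchange_big. Qed.

Lemma exchange_big_last3 (A B C X : finType) (F : A -> B -> C -> X -> R) :
  \sum_a \sum_b \sum_c \sum_x F a b c x = \sum_x \sum_a \sum_b \sum_c F a b c x.
Proof. under eq_bigr do rewrite exchange_big_last2; exact: exchange_big. Qed.

Lemma exchange_big_last4 (A B C D X : finType) (F : A -> B -> C -> D -> X -> R) :
  \sum_a \sum_b \sum_c \sum_d \sum_x F a b c d x =
  \sum_x \sum_a \sum_b \sum_c \sum_d F a b c d x.
Proof. under eq_bigr do rewrite exchange_big_last3; exact: exchange_big. Qed.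

End NestedSums.

Section Coordinates.
Variables (k : fieldType) (n : nat) (H : hopf_data k n).
Implicit Types (b x y : 'rV[k]_n) (T U : tensor2 k n).

Lemma bvecE (i j : 'I_n) : bvec k i 0 j = (j == i)%:R.
Proof. by rewrite /bvec mxE eqxx. Qed.

Lemma hmulE x y c : hmul H x y 0 c = \sum_i \sum_j x 0 i * y 0 j * hmu H i j 0 c.
Proof.
rewrite /hmul summxE; apply: eq_bigr => i _; rewrite summxE; apply: eq_bigr => j _.
by rewrite mxE.
Qed.

Lemma hmul_bvec i j : hmul H (bvec k i) (bvec k j) = hmu H i j.
Proof.
apply/rowP => c; rewrite hmulE.
rewrite (eq_bigr (fun a => (a == i)%:R * \sum_b (b == j)%:R * hmu H a b 0 c)).
  by rewrite sum_delta_mull sum_delta_mull.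
move=> a _; rewrite mulr_sumr; apply: eq_bigr => b _; by rewrite !bvecE -mulrA.
Qed.

Lemma hpowS x m : hpow H x m.+1 = hmul H x (hpow H x m).
Proof. by []. Qed.

Lemma hmul0r x : hmul H 0 x = 0.
Proof.
apply/rowP => c; rewrite hmulE mxE big1 // => i _; rewrite big1 // => j _.
by rewrite mxE !mul0r.
Qed.

Lemma hDelta_bvec c i j : hDelta H (bvec k c) i j = hdelta H c i j.
Proof. rewrite /hDelta; under eq_bigr do rewrite bvecE; exact: sum_delta_mull. Qed.

Lemma tmul2_pure x y x' y' i j :
  tmul2 H (tpure2 x y) (tpure2 x' y') i j = hmul H x x' 0 i * hmul H y y' 0 j.
Proof.
rewrite !hmulE mulr_sum2 /tmul2 /tpure2; distr_sums.
do 4! (apply: eq_bigr => ? _); ring.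
Qed.

Lemma tmul2_teq T T' U U' i j :
  teq2 T T' -> teq2 U U' -> tmul2 H T U i j = tmul2 H T' U' i j.
Proof. move=> eT eU; rewrite /tmul2; do 4! (apply: eq_bigr => ? _); by rewrite eT eU. Qed.

Lemma hpair_sum (I : finType) b (v : I -> 'rV[k]_n) :
  hpair b (\sum_i v i) = \sum_i hpair b (v i).
Proof.
rewrite /hpair; under eq_bigr do rewrite summxE mulr_sumr; exact: exchange_big.
Qed.

Lemma hpairZ b c x : hpair b (c *: x) = c * hpair b x.
Proof. rewrite /hpair mulr_sumr; apply: eq_bigr => i _; rewrite mxE; ring. Qed.

Lemma hpair_bvec b i : hpair b (bvec k i) = b 0 i.
Proof. rewrite /hpair; under eq_bigr do rewrite bvecE; exact: sum_delta_mulr. Qed.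

Lemma hpair0r b : hpair b 0 = 0.
Proof. rewrite /hpair big1 // => i _; by rewrite mxE mulr0. Qed.

Lemma hpair0l x : hpair 0 x = 0.
Proof. rewrite /hpair big1 // => i _; by rewrite mxE mul0r. Qed.

(* [b], read as a functional on H in the dual basis, is multiplicative. *)
Definition multiplicative b := forall i j, \sum_a b 0 a * hmu H i j 0 a = b 0 i * b 0 j.

Lemma hpair_hmul b x y : multiplicative b -> hpair b (hmul H x y) = hpair b x * hpair b y.
Proof.
move=> mb; rewrite /hpair mulr_sum2.
under eq_bigr do rewrite hmulE; rewrite exchange_mulr_sum2.
apply: eq_bigr => i _; apply: eq_bigr => j _.
rewrite (eq_bigr (fun a => b 0 a * hmu H i j 0 a * (x 0 i * y 0 j))).
  by rewrite -mulr_suml mb; ring.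
by move=> a _; ring.
Qed.

Definition lslice b T : 'rV[k]_n := \row_j \sum_i b 0 i * T i j.
Definition rslice b T : 'rV[k]_n := \row_i \sum_j T i j * b 0 j.
Definition lslice3 b (T : tensor3 k n) : tensor2 k n := fun j l => \sum_i b 0 i * T i j l.
Definition rslice3 b (T : tensor3 k n) : tensor2 k n := fun i j => \sum_l T i j l * b 0 l.

Lemma lslice_teq b T U : teq2 T U -> lslice b T = lslice b U.
Proof. move=> e; apply/rowP => j; rewrite !mxE; apply: eq_bigr => i _; by rewrite e. Qed.

Lemma rslice_teq b T U : teq2 T U -> rslice b T = rslice b U.
Proof. move=> e; apply/rowP => j; rewrite !mxE; apply: eq_bigr => i _; by rewrite e. Qed.

Lemma lslice_pure b x y : lslice b (tpure2 x y) = hpair b x *: y.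
Proof. apply/rowP => j; rewrite !mxE /hpair /tpure2 mulr_suml; apply: eq_bigr => i _; ring. Qed.

Lemma rslice_pure b x y : rslice b (tpure2 x y) = hpair b y *: x.
Proof. apply/rowP => j; rewrite !mxE /hpair /tpure2 mulr_suml; apply: eq_bigr => i _; ring. Qed.

Lemma hpair_lslice_rslice b T : hpair b (lslice b T) = hpair b (rslice b T).
Proof.
rewrite /hpair; under eq_bigr do rewrite mxE mulr_sumr.
rewrite exchange_big; apply: eq_bigr => j _; rewrite mxE mulr_sumr; apply: eq_bigr => i _; ring.
Qed.

Lemma lslice_tmul2 b T U : multiplicative b ->
  lslice b (tmul2 H T U) = hmul H (lslice b T) (lslice b U).
Proof.
move=> mb; apply/rowP => c; rewrite mxE hmulE /tmul2 exchange_mulr_sum4.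
under [RHS]eq_bigr => j _ do under eq_bigr => j' _ do rewrite !mxE mulr_sum2_mulr.
under [RHS]eq_bigr => j _ do rewrite exchange_big.
rewrite [RHS]exchange_big.
under [RHS]eq_bigr => i _ do under eq_bigr => j _ do rewrite exchange_big.
apply: eq_bigr => i _; apply: eq_bigr => j _; apply: eq_bigr => i' _; apply: eq_bigr => j' _.
rewrite (eq_bigr (fun a => b 0 a * hmu H i i' 0 a * (T i j * U i' j' * hmu H j j' 0 c))).
  by rewrite -mulr_suml mb; ring.
by move=> a _; ring.
Qed.

Lemma rslice_tmul2 b T U : multiplicative b ->
  rslice b (tmul2 H T U) = hmul H (rslice b T) (rslice b U).
Proof.
move=> mb; apply/rowP => c; rewrite mxE hmulE /tmul2.
under eq_bigr do rewrite mulrC; rewrite exchange_mulr_sum4.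
under [RHS]eq_bigr => j _ do under eq_bigr => j' _ do rewrite !mxE mulr_sum2_mulr.
under [RHS]eq_bigr => j _ do rewrite exchange_big.
apply: eq_bigr => i _; apply: eq_bigr => j _; apply: eq_bigr => i' _; apply: eq_bigr => j' _.
rewrite (eq_bigr (fun a => b 0 a * hmu H j j' 0 a * (T i j * U i' j' * hmu H i i' 0 c))).
  by rewrite -mulr_suml mb; ring.
by move=> a _; ring.
Qed.

Lemma lslice3_tmul3 b (T U : tensor3 k n) j l : multiplicative b ->
  \sum_a b 0 a * tmul3 H T U a j l = tmul2 H (lslice3 b T) (lslice3 b U) j l.
Proof.
move=> mb; rewrite /tmul3 /tmul2 exchange_mulr_sum6.
under [RHS]eq_bigr => j1 _ do under eq_bigr => j2 _ do under eq_bigr => j3 _ do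
  under eq_bigr => j4 _ do rewrite mulr_sum2_mulr.
rewrite [RHS]exchange_big_last4.
under [RHS]eq_bigr => i _ do under eq_bigr => j1 _ do under eq_bigr => j2 _ do
  rewrite exchange_big_last2.
apply: eq_bigr => i _; apply: eq_bigr => j1 _; apply: eq_bigr => j2 _.
apply: eq_bigr => i' _; apply: eq_bigr => j1' _; apply: eq_bigr => j2' _.
rewrite (eq_bigr (fun a => b 0 a * hmu H i i' 0 a * (T i j1 j2 * U i' j1' j2' *
   (hmu H j1 j1' 0 j * hmu H j2 j2' 0 l)))).
  by rewrite -mulr_suml mb; ring.
by move=> a _; ring.
Qed.

Lemma rslice3_tmul3 b (T U : tensor3 k n) i j : multiplicative b ->
  \sum_c tmul3 H T U i j c * b 0 c = tmul2 H (rslice3 b T) (rslice3 b U) i j.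
Proof.
move=> mb; rewrite /tmul3 /tmul2.
under eq_bigr do rewrite mulrC; rewrite exchange_mulr_sum6.
under [RHS]eq_bigr => j1 _ do under eq_bigr => j2 _ do under eq_bigr => j3 _ do
  under eq_bigr => j4 _ do rewrite mulr_sum2_mulr.
under [RHS]eq_bigr => i1 _ do under eq_bigr => j1 _ do rewrite exchange_big_last2.
apply: eq_bigr => i1 _; apply: eq_bigr => j1 _; apply: eq_bigr => l _.
apply: eq_bigr => i' _; apply: eq_bigr => j1' _; apply: eq_bigr => l' _.
rewrite (eq_bigr (fun a => b 0 a * hmu H l l' 0 a * (T i1 j1 l * U i' j1' l' *
   (hmu H i1 i' 0 i * hmu H j1 j1' 0 j)))).
  by rewrite -mulr_suml mb; ring.
by move=> a _; ring.
Qed.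

End Coordinates.

Section HopfAxioms.
Variables (k : fieldType) (n : nat) (H : hopf_data k n).
Hypothesis hH : is_hopf H.
Implicit Types (x y z : 'rV[k]_n).
Local Notation one := (hone H).
Local Notation d := (hdelta H).
Local Notation eps := (hone (hdual H)).
Local Notation conv := (hmul (hdual H)).

Lemma hmulA x y z : hmul H (hmul H x y) z = hmul H x (hmul H y z).
Proof. by case: hH. Qed.

Lemma hmul1r x : hmul H one x = x.
Proof. by case: hH => _ [/(_ x) []]. Qed.

Lemma hmulr1 x : hmul H x one = x.
Proof. by case: hH => _ [/(_ x) []]. Qed.

Lemma hdelta_coassoc i a b c : \sum_j d i j c * d j a b = \sum_l d i a l * d l b c.
Proof. by case: hH => _ [_ []]. Qed.

Lemma hdelta_counitl i b : \sum_j heps H j * d i j b = (i == b)%:R.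
Proof. by case: hH => _ [_ [_ []]]. Qed.

Lemma hdelta_counitr i a : \sum_l d i a l * heps H l = (i == a)%:R.
Proof. by case: hH => _ [_ [_ [_ []]]]. Qed.

Lemma hDelta_hmul x y : teq2 (hDelta H (hmul H x y)) (tmul2 H (hDelta H x) (hDelta H y)).
Proof. by case: hH => _ [_ [_ [_ [_ []]]]]. Qed.

Lemma hDelta_one : teq2 (hDelta H one) (tpure2 one one).
Proof. by case: hH => _ [_ [_ [_ [_ [_ []]]]]]. Qed.

Lemma hcounit_hmul x y : hcounit H (hmul H x y) = hcounit H x * hcounit H y.
Proof. by case: hH => _ [_ [_ [_ [_ [_ [_ []]]]]]]. Qed.

Lemma hcounit_one : hcounit H one = 1.
Proof. by case: hH => _ [_ [_ [_ [_ [_ [_ [_ []]]]]]]]. Qed.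

Lemma antipode_left x :
  \sum_a \sum_b hDelta H x a b *: hmul H (hanti H (bvec k a)) (bvec k b) = hcounit H x *: one.
Proof. by case: hH => _ [_ [_ [_ [_ [_ [_ [_ [_ []]]]]]]]]. Qed.

Lemma epsE a : eps 0 a = heps H a.
Proof. by rewrite mxE. Qed.

Lemma convE b g a : conv b g 0 a = \sum_i \sum_j b 0 i * g 0 j * d a i j.
Proof. rewrite hmulE; apply: eq_bigr => i _; apply: eq_bigr => j _; by rewrite mxE. Qed.

Lemma convA b g e : conv (conv b g) e = conv b (conv g e).
Proof.
apply/rowP => a; rewrite !convE.
setoid_rewrite convE; distr_sums.
rewrite -[LHS]exchange_big_last3 -[LHS]exchange_big_last2.
under [RHS]eq_bigr => i _ do rewrite -exchange_big_last2.
apply: eq_bigr => i _; apply: eq_bigr => j _; apply: eq_bigr => l _.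
rewrite (eq_bigr (fun p => b 0 i * g 0 j * e 0 l * (d a p l * d p i j))); last by move=> p _; ring.
rewrite -mulr_sumr hdelta_coassoc mulr_sumr; apply: eq_bigr => q _; ring.
Qed.

Lemma conv_epsl b : conv eps b = b.
Proof.
apply/rowP => a; rewrite convE exchange_big /=.
rewrite (eq_bigr (fun j => b 0 j * (a == j)%:R)); first by rewrite sum_delta_mulr_sym.
move=> j _; rewrite -(hdelta_counitl a j) mulr_sumr; apply: eq_bigr => i _; rewrite epsE; ring.
Qed.

Lemma conv_epsr b : conv b eps = b.
Proof.
apply/rowP => a; rewrite convE.
rewrite (eq_bigr (fun i => b 0 i * (a == i)%:R)); first by rewrite sum_delta_mulr_sym.
move=> i _; rewrite -(hdelta_counitr a i) mulr_sumr; apply: eq_bigr => j _; rewrite epsE; ring.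
Qed.

Lemma multiplicative_eps : multiplicative H eps.
Proof.
move=> i j; have := hcounit_hmul (bvec k i) (bvec k j); rewrite hmul_bvec /hcounit !epsE => E.
under eq_bigr do rewrite epsE mulrC.
rewrite E; congr (_ * _); (under eq_bigr do rewrite bvecE); exact: sum_delta_mull.
Qed.

Lemma hpair_eps_one : hpair eps one = 1.
Proof. rewrite -hcounit_one /hpair /hcounit; apply: eq_bigr => i _; by rewrite epsE mulrC. Qed.

Lemma hone_neq0 : one != 0.
Proof.
apply/eqP => e; have := hpair_eps_one; rewrite e hpair0r => /eqP.
by rewrite eq_sym oner_eq0.
Qed.

Lemma neq0_of_hmul_eq1 x y : hmul H x y = one -> x != 0.
Proof.
move=> e; apply/eqP => x0; move: e; rewrite x0 hmul0r => e.
by move: hone_neq0; rewrite -e eqxx.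
Qed.

(* Unital algebra maps H -> k, i.e. the group-likes of H^*. *)
Definition hchar b := multiplicative H b /\ hpair b one = 1.

Lemma hchar_neq0 b : hchar b -> b != 0.
Proof.
case=> _ e; apply/eqP => b0; move: e; rewrite b0 hpair0l => /eqP.
by rewrite eq_sym oner_eq0.
Qed.

Lemma hchar_grouplike b : hchar b -> grouplike (hdual H) b.
Proof.
move=> hb; split; first exact: hchar_neq0.
by case: hb => mb _ i j; rewrite /hDelta /tpure2 /= -mb.
Qed.

Lemma grouplike_hchar b : grouplike (hdual H) b -> hchar b.
Proof.
case=> nz te.
have mb : multiplicative H b by move=> i j; have := te i j; rewrite /hDelta /tpure2 /= => <-.
split=> //.
have [i bi | all0] := pickP (fun i => b 0 i != 0); last first.
  by case/eqP: nz; apply/rowP => i; have := all0 i; rewrite mxE /= => /negbFE/eqP.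
have := hpair_hmul one (bvec k i) mb.
by rewrite hmul1r !hpair_bvec -{1}(mul1r (b 0 i)) => /(mulIf bi) ->.
Qed.

Lemma hchar_eps : hchar eps.
Proof. split; [exact: multiplicative_eps | exact: hpair_eps_one]. Qed.

Lemma conv_lslice b g a :
  conv b g 0 a = \sum_j g 0 j * \sum_i b 0 i * hDelta H (bvec k a) i j.
Proof.
rewrite convE exchange_big; apply: eq_bigr => j _; rewrite mulr_sumr; apply: eq_bigr => i _.
rewrite hDelta_bvec; ring.
Qed.

Lemma hchar_conv b g : hchar b -> hchar g -> hchar (conv b g).
Proof.
move=> [mb pb] [mg pg]; split.
  move=> x y.
  transitivity (\sum_j g 0 j * \sum_i b 0 i * hDelta H (hmul H (bvec k x) (bvec k y)) i j).
    rewrite hmul_bvec; setoid_rewrite convE; rewrite /hDelta; distr_sums.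
    rewrite -[LHS]exchange_big_last2 [LHS]exchange_big.
    apply: eq_bigr => j _; apply: eq_bigr => i _; apply: eq_bigr => a _; ring.
  under eq_bigr do under eq_bigr do rewrite hDelta_hmul.
  have lsliceE T : \sum_j g 0 j * \sum_i b 0 i * T i j = hpair g (lslice b T).
    by rewrite /hpair; apply: eq_bigr => j _; rewrite mxE.
  by rewrite lsliceE lslice_tmul2 // hpair_hmul // -!lsliceE -!conv_lslice.
rewrite /hpair; setoid_rewrite conv_lslice; setoid_rewrite hDelta_bvec; distr_sums.
transitivity (hpair b one * hpair g one); last by rewrite pb pg mulr1.
rewrite -[LHS]exchange_big_last2 [LHS]exchange_big /hpair mulr_sum2.
apply: eq_bigr => i _; apply: eq_bigr => j _.
have := hDelta_one i j; rewrite /hDelta /tpure2 => e.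
transitivity (g 0 j * b 0 i * \sum_a one 0 a * d a i j); last by rewrite e; ring.
rewrite mulr_sumr; apply: eq_bigr => a _; ring.
Qed.

Lemma hchar_hpow b m : hchar b -> hchar (hpow (hdual H) b m).
Proof. move=> hb; elim: m => [|m IH] /=; [exact: hchar_eps | exact: hchar_conv]. Qed.

(* The convolution inverse of a character b is b o S. *)
Definition hchar_inv b : 'rV[k]_n := \row_a hpair b (hS H a).

Lemma hchar_invK b : hchar b -> conv (hchar_inv b) b = eps.
Proof.
move=> [mb pb]; apply/rowP => c.
have := congr1 (hpair b) (antipode_left (bvec k c)).
rewrite hpair_sum hpairZ pb mulr1 epsE /hcounit.
under [X in _ = X -> _]eq_bigr do rewrite bvecE.
rewrite sum_delta_mull => <-; rewrite convE; apply: eq_bigr => a _.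
rewrite hpair_sum; apply: eq_bigr => j _.
have hanti_bvec : hanti H (bvec k a) = hS H a.
  by apply/rowP => l; rewrite /hanti summxE; under eq_bigr do rewrite mxE bvecE; exact: sum_delta_mull.
by rewrite hpairZ hpair_hmul // hanti_bvec hpair_bvec hDelta_bvec mxE; ring.
Qed.

Lemma hpair_hpow b x m : hchar b -> hpair b (hpow H x m) = hpair b x ^+ m.
Proof.
case=> mb pb; elim: m => [|m IH] /=; first by rewrite pb expr0.
by rewrite hpair_hmul // IH exprS.
Qed.

End HopfAxioms.

Section HitActions.
Variables (k : fieldType) (n : nat) (H : hopf_data k n).
Hypothesis hH : is_hopf H.
Local Notation conv := (hmul (hdual H)).
Local Notation eps := (hone (hdual H)).
Local Notation d := (hdelta H).

(* [rhit b x] is x <- b = b(x1) x2 and [lhit b x] is b -> x = x1 b(x2). *)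
Definition rhit (b x : 'rV[k]_n) := lslice b (hDelta H x).
Definition lhit (b x : 'rV[k]_n) := rslice b (hDelta H x).

Lemma rhit_eps x : rhit eps x = x.
Proof.
apply/rowP => j; rewrite /rhit /hDelta mxE; setoid_rewrite epsE; distr_sums.
rewrite exchange_big /= -[RHS](sum_delta_mulr_sym j); apply: eq_bigr => i _.
rewrite eq_sym -(hdelta_counitl hH i j) mulr_sumr; apply: eq_bigr => a _; ring.
Qed.

Lemma lhit_eps x : lhit eps x = x.
Proof.
apply/rowP => j; rewrite /lhit /hDelta mxE; setoid_rewrite epsE; distr_sums.
rewrite exchange_big /= -[RHS](sum_delta_mulr_sym j); apply: eq_bigr => i _.
rewrite eq_sym -(hdelta_counitr hH i j) mulr_sumr; apply: eq_bigr => a _; ring.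
Qed.

Lemma lhit_conv b g x : lhit b (lhit g x) = lhit (conv b g) x.
Proof.
apply/rowP => a; rewrite /lhit /hDelta !mxE /rslice.
under [LHS]eq_bigr => j _ do under eq_bigr => i _ do rewrite mxE.
setoid_rewrite convE; distr_sums.
rewrite [LHS]exchange_big_last3.
under [LHS]eq_bigr => i0 _ do under eq_bigr => j _ do rewrite exchange_big.
rewrite -[RHS]exchange_big_last3.
apply: eq_bigr => i0 _; apply: eq_bigr => j _; apply: eq_bigr => c _.
transitivity (x 0 i0 * g 0 c * b 0 j * \sum_i d i0 i c * d i a j).
  rewrite mulr_sumr; apply: eq_bigr => i _; ring.
rewrite (hdelta_coassoc hH) mulr_sumr; apply: eq_bigr => l _; ring.
Qed.

Lemma central_of_hits b : (forall x, rhit b x = lhit b x) -> central (hdual H) b.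
Proof.
move=> e y; apply/rowP => a; rewrite !convE.
transitivity (\sum_j y 0 j * rhit b (bvec k a) 0 j).
  rewrite exchange_big; apply: eq_bigr => j _; rewrite /rhit /lslice mxE mulr_sumr.
  apply: eq_bigr => i _; rewrite hDelta_bvec; ring.
rewrite e; apply: eq_bigr => j _; rewrite /lhit /rslice mxE mulr_sumr.
apply: eq_bigr => i _; rewrite hDelta_bvec; ring.
Qed.

End HitActions.

Section RMatrixLegs.
Variables (k : fieldType) (n : nat) (H : hopf_data k n).
Hypothesis hH : is_hopf H.
Local Notation one := (hone H).
Local Notation d := (hdelta H).
Local Notation eps := (hone (hdual H)).
Local Notation conv := (hmul (hdual H)).
Local Notation lhit := (lhit H).
Local Notation rhit := (rhit H).
Variables (R Rinv : tensor2 k n).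
Hypothesis R_rinv : teq2 (tmul2 H R Rinv) (tpure2 one one).
Hypothesis R_linv : teq2 (tmul2 H Rinv R) (tpure2 one one).
Hypothesis R_coprod_l : teq3 (fun a b c => \sum_i R i c * d i a b)
  (tmul3 H (fun a b c => R a c * one 0 b) (fun a b c => one 0 a * R b c)).
Hypothesis R_coprod_r : teq3 (fun a b c => \sum_j R a j * d j b c)
  (tmul3 H (fun a b c => R a c * one 0 b) (fun a b c => R a b * one 0 c)).
Hypothesis R_conj :
  forall x, teq2 (fun a b => hDelta H x b a) (tmul2 H (tmul2 H R (hDelta H x)) Rinv).

Definition leg_l (b : 'rV[k]_n) := lslice b R.
Definition leg_r (b : 'rV[k]_n) := rslice b R.

Lemma leg_l_unit b : hchar H b ->
  hmul H (leg_l b) (lslice b Rinv) = one /\ hmul H (lslice b Rinv) (leg_l b) = one.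
Proof.
case=> mb pb; rewrite /leg_l -!lslice_tmul2 //.
by rewrite (lslice_teq _ R_rinv) (lslice_teq _ R_linv) lslice_pure pb scale1r.
Qed.

Lemma leg_r_unit b : hchar H b ->
  hmul H (leg_r b) (rslice b Rinv) = one /\ hmul H (rslice b Rinv) (leg_r b) = one.
Proof.
case=> mb pb; rewrite /leg_r -!rslice_tmul2 //.
by rewrite (rslice_teq _ R_rinv) (rslice_teq _ R_linv) rslice_pure pb scale1r.
Qed.

Lemma lhit_leg_l b x : hchar H b ->
  hmul H (lhit b x) (leg_l b) = hmul H (leg_l b) (rhit b x).
Proof.
move=> hb; have [mb _] := hb; have [_ linv] := leg_l_unit hb.
have -> : lhit b x = hmul H (hmul H (leg_l b) (rhit b x)) (lslice b Rinv).
  rewrite /leg_l /rhit -!lslice_tmul2 // -(lslice_teq _ (R_conj x)).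
  apply/rowP => j; rewrite !mxE; apply: eq_bigr => i _; exact: mulrC.
by rewrite hmulA // linv hmulr1.
Qed.

Lemma rhit_leg_r b x : hchar H b ->
  hmul H (rhit b x) (leg_r b) = hmul H (leg_r b) (lhit b x).
Proof.
move=> hb; have [mb _] := hb; have [_ linv] := leg_r_unit hb.
have -> : rhit b x = hmul H (hmul H (leg_r b) (lhit b x)) (rslice b Rinv).
  rewrite /leg_r /lhit -!rslice_tmul2 // -(rslice_teq _ (R_conj x)).
  apply/rowP => j; rewrite !mxE; apply: eq_bigr => i _; exact: mulrC.
by rewrite hmulA // linv hmulr1.
Qed.

Lemma leg_l_conv b g : hchar H b -> hchar H g ->
  leg_l (conv b g) = hmul H (leg_l b) (leg_l g).
Proof.
move=> [mb pb] [mg pg]; apply/rowP => c.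
transitivity (\sum_j g 0 j * \sum_i b 0 i * (\sum_a R a c * d a i j)).
  rewrite /leg_l /lslice mxE; setoid_rewrite convE; distr_sums.
  rewrite -[LHS]exchange_big_last2 [LHS]exchange_big.
  do 3! (apply: eq_bigr => ? _); ring.
under eq_bigr do rewrite (eq_bigr _ (fun i _ => congr1 (fun t => b 0 i * t) (R_coprod_l i _ c))).
under eq_bigr do rewrite lslice3_tmul3 //.
transitivity (lslice g (tmul2 H (lslice3 b (fun a b0 c0 => R a c0 * one 0 b0))
                                 (lslice3 b (fun a b0 c0 => one 0 a * R b0 c0))) 0 c).
  by rewrite mxE.
rewrite lslice_tmul2 //; congr (hmul H _ _ 0 c); apply/rowP => l; rewrite !mxE /lslice3.
  rewrite -[RHS]mul1r -pg /hpair mulr_sum2; apply: eq_bigr => j _; rewrite mulr_sumr.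
  apply: eq_bigr => i _; ring.
rewrite -[RHS]mul1r -pb /hpair mulr_sum2 exchange_big; apply: eq_bigr => j _; rewrite mulr_sumr.
apply: eq_bigr => i _; ring.
Qed.

Lemma hDelta_leg_l b : hchar H b -> teq2 (hDelta H (leg_l b)) (tpure2 (leg_l b) (leg_l b)).
Proof.
move=> [mb pb] j l.
transitivity (\sum_a b 0 a * tmul3 H (fun a b0 c => R a c * one 0 b0)
                (fun a b0 c => R a b0 * one 0 c) a j l).
  rewrite -(eq_bigr _ (fun a _ => congr1 (fun t => b 0 a * t) (R_coprod_r a j l))).
  rewrite /hDelta /leg_l /lslice; under [LHS]eq_bigr => i _ do rewrite mxE; distr_sums.
  rewrite [LHS]exchange_big; do 2! (apply: eq_bigr => ? _); ring.
rewrite lslice3_tmul3 // (@tmul2_teq _ _ _ _ (tpure2 one (leg_l b)) _ (tpure2 (leg_l b) one)).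
- by rewrite tmul2_pure hmul1r // hmulr1.
- by move=> x y; rewrite /lslice3 /tpure2 /leg_l /lslice mxE mulr_sumr; apply: eq_bigr => i _; ring.
- by move=> x y; rewrite /lslice3 /tpure2 /leg_l /lslice mxE mulr_suml; apply: eq_bigr => i _; ring.
Qed.

Lemma hDelta_leg_r b : hchar H b -> teq2 (hDelta H (leg_r b)) (tpure2 (leg_r b) (leg_r b)).
Proof.
move=> [mb pb] j l.
transitivity (\sum_c tmul3 H (fun a b0 c => R a c * one 0 b0)
                (fun a b0 c => one 0 a * R b0 c) j l c * b 0 c).
  rewrite -(eq_bigr _ (fun c _ => congr1 (fun t => t * b 0 c) (R_coprod_l j l c))).
  rewrite /hDelta /leg_r /rslice; under [LHS]eq_bigr => i _ do rewrite mxE; distr_sums.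
  rewrite [LHS]exchange_big; do 2! (apply: eq_bigr => ? _); ring.
rewrite rslice3_tmul3 // (@tmul2_teq _ _ _ _ (tpure2 (leg_r b) one) _ (tpure2 one (leg_r b))).
- by rewrite tmul2_pure hmul1r // hmulr1.
- by move=> x y; rewrite /rslice3 /tpure2 /leg_r /rslice mxE mulr_suml; apply: eq_bigr => i _; ring.
- by move=> x y; rewrite /rslice3 /tpure2 /leg_r /rslice mxE mulr_sumr; apply: eq_bigr => i _; ring.
Qed.

Lemma grouplike_leg_l b : hchar H b -> grouplike H (leg_l b).
Proof.
move=> hb; split; last exact: hDelta_leg_l.
by have [+ _] := leg_l_unit hb; apply: neq0_of_hmul_eq1.
Qed.

Lemma hpow_leg_l b m : hchar H b -> hpow H (leg_l b) m.+1 = leg_l (hpow (hdual H) b m.+1).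
Proof.
move=> hb; elim: m => [|m IH]; first by rewrite /= conv_epsr // hmulr1.
by rewrite hpowS IH -leg_l_conv -?hpowS //; exact: hchar_hpow.
Qed.

Hypothesis centre_H : forall g, grouplike H g -> central H g -> g = one.
Hypothesis centre_Hdual : forall a, grouplike (hdual H) a -> central (hdual H) a -> a = eps.

Lemma leg_l_eps : leg_l eps = one.
Proof.
apply: centre_H; first exact/grouplike_leg_l/hchar_eps.
move=> x; have := lhit_leg_l x (hchar_eps hH).
by rewrite rhit_eps // lhit_eps.
Qed.

Lemma hpow_eps_of_leg_l b m : hchar H b ->
  hpow H (leg_l b) m.+1 = one -> hpow (hdual H) b m.+1 = eps.
Proof.
move=> hb; rewrite hpow_leg_l // => gm1.
have hbm : hchar H (hpow (hdual H) b m.+1) := hchar_hpow hH m.+1 hb.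
apply: centre_Hdual; first exact: hchar_grouplike.
apply: central_of_hits => x; have := lhit_leg_l x hbm.
by rewrite gm1 hmul1r // hmulr1 // => ->.
Qed.

Lemma has_order_leg_l b p : hchar H b -> has_order (hdual H) b p -> has_order H (leg_l b) p.
Proof.
move=> hb [p_gt0 [bp b_ord]]; split=> //.
case: p p_gt0 bp b_ord => // p' _ bp b_ord; split; first by rewrite hpow_leg_l // bp leg_l_eps.
move=> [//|j] _ jp; apply/eqP => /(hpow_eps_of_leg_l hb); exact/eqP/b_ord.
Qed.

(* Conjugation by g = leg_l b turns b -> x into x <- b, and conjugation by
   h = leg_r b turns it back; b -> _ is onto when b has finite order. *)
Lemma central_leg_l_leg_r b m : hchar H b -> hpow (hdual H) b m.+1 = eps ->
  central H (hmul H (leg_l b) (leg_r b)).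
Proof.
move=> hb bm y.
have -> : y = lhit b (lhit (hpow (hdual H) b m) y).
  by rewrite lhit_conv // -hpowS bm lhit_eps.
by rewrite hmulA // -rhit_leg_r // -hmulA // -lhit_leg_l // hmulA.
Qed.

Lemma grouplike_leg_l_leg_r b : hchar H b -> grouplike H (hmul H (leg_l b) (leg_r b)).
Proof.
move=> hb; split.
  have [l_rinv _] := leg_l_unit hb; have [r_rinv _] := leg_r_unit hb.
  apply: (@neq0_of_hmul_eq1 _ _ _ hH _ (hmul H (rslice b Rinv) (lslice b Rinv))).
  by rewrite !hmulA // -[hmul H (leg_r b) (hmul H _ _)]hmulA // r_rinv hmul1r.
move=> i j; rewrite (hDelta_hmul hH).
by rewrite (tmul2_teq _ _ _ (hDelta_leg_l hb) (hDelta_leg_r hb)) tmul2_pure.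
Qed.

Lemma hpair_leg_l_eq1 b p : prime p -> odd p -> hchar H b ->
  has_order (hdual H) b p -> hpair b (leg_l b) = 1.
Proof.
move=> p_pr p_odd hb [p_gt0 [bp _]].
have [p' ep] : exists p', p = p'.+1 by exists p.-1; rewrite prednK.
have gh1 : hmul H (leg_l b) (leg_r b) = one.
  apply: centre_H; first exact: grouplike_leg_l_leg_r.
  by apply: (central_leg_l_leg_r (m := p')); rewrite -?ep.
have sq1 : hpair b (leg_l b) ^+ 2 = 1.
  have [mb pb] := hb.
  by rewrite expr2 {2}(hpair_lslice_rslice b R) -(hpair_hmul _ _ mb) gh1.
have : hpair b (leg_l b) ^+ p = 1.
  by rewrite -(hpair_hpow _ _ hb) ep hpow_leg_l // -ep bp leg_l_eps; case: hb.
by rewrite -(odd_double_half p) p_odd -mul2n exprD exprM sq1 expr1n mulr1 expr1.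
Qed.

End RMatrixLegs.

Section CauchyGrouplike.
Variables (k : fieldType) (n : nat) (H : hopf_data k n).
Hypothesis hH : is_hopf H.
Local Notation eps := (hone (hdual H)).
Local Notation conv := (hmul (hdual H)).
Variable s : seq 'rV[k]_n.
Hypothesis s_grouplike : forall x, x \in s <-> grouplike (hdual H) x.

Local Notation G := (seq_sub s).

Lemma hchar_seq_sub (a : G) : hchar H (val a).
Proof. exact/(grouplike_hchar hH)/s_grouplike/ssvalP. Qed.

Lemma conv_seq_sub (a b : G) : conv (val a) (val b) \in s.
Proof. by apply/s_grouplike/hchar_grouplike/(hchar_conv hH); apply: hchar_seq_sub. Qed.

Definition lconv (a b : G) : G := insubd b (conv (val a) (val b)).

Lemma lconvE a b : val (lconv a b) = conv (val a) (val b).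
Proof. exact: insubdK (conv_seq_sub a b). Qed.

Lemma lconv_inj a : injective (lconv a).
Proof.
move=> b1 b2 /(congr1 val); rewrite !lconvE => e; apply: val_inj.
have aK := hchar_invK hH (hchar_seq_sub a).
by rewrite -[val b1](conv_epsl hH) -[val b2](conv_epsl hH) -aK !convA // e.
Qed.

Definition lconv_perm a : {perm G} := perm (@lconv_inj a).

Lemma eps_in_s : eps \in s.
Proof. exact/s_grouplike/hchar_grouplike/(hchar_eps hH). Qed.

Definition eps_sub : G := SeqSub eps_in_s.

Lemma lconv_perm_group_set : group_set [set lconv_perm a | a : G].
Proof.
apply/group_setP; split.
  apply/imsetP; exists eps_sub => //; apply/permP => b; apply: val_inj.
  by rewrite perm1 permE lconvE conv_epsl.
move=> _ _ /imsetP[a _ ->] /imsetP[b _ ->]; apply/imsetP; exists (lconv b a) => //.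
by apply/permP => c; apply: val_inj; rewrite permM !permE !lconvE convA.
Qed.

Lemma lconv_perm_inj : injective lconv_perm.
Proof.
move=> a b /(congr1 (fun f : {perm G} => val (f eps_sub))).
by rewrite /= !permE !lconvE !conv_epsr // => /val_inj.
Qed.

Lemma lconv_permX a m b : val ((lconv_perm a ^+ m)%g b) = conv (hpow (hdual H) (val a) m) (val b).
Proof.
elim: m b => [|m IH] b; first by rewrite expg0 perm1 /= conv_epsl.
by rewrite expgSr permM permE lconvE IH /= convA.
Qed.

Lemma exists_grouplike_of_order p : prime p -> uniq s -> (p %| size s)%N ->
  exists a, grouplike (hdual H) a /\ has_order (hdual H) a p.
Proof.
move=> p_pr s_uniq p_dvd.
have p_dvd_G : (p %| #|Group lconv_perm_group_set|)%N.
  by rewrite /= card_imset ?card_seq_sub //; exact: lconv_perm_inj.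
have [_ /imsetP[a _ ->] ord_a] := Cauchy p_pr p_dvd_G.
exists (val a); split; first exact/s_grouplike/ssvalP.
split; first exact: prime_gt0.
split.
  have := lconv_permX a #[lconv_perm a]%g eps_sub.
  by rewrite expg_order perm1 /= conv_epsr // ord_a => <-.
move=> j j_gt0 j_lt; apply/eqP => aj.
have : (lconv_perm a ^+ j)%g = 1%g.
  by apply/permP => b; rewrite perm1; apply: val_inj; rewrite lconv_permX aj conv_epsl.
by move/eqP; rewrite -order_dvdn ord_a => /(dvdn_leq j_gt0); rewrite leqNgt j_lt.
Qed.

End CauchyGrouplike.

Unset Implicit Arguments. Set Strict Implicit.
Theorem mainTheorem14 (k : fieldType) (n : nat) (H : hopf_data k n) :
  is_hopf H ->
  (exists alpha, grouplike (hdual H) alpha /\ alpha != hone (hdual H)) ->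
  (forall alpha, grouplike (hdual H) alpha -> central (hdual H) alpha ->
     alpha = hone (hdual H)) ->
  (forall g, grouplike H g -> central H g -> g = hone H) ->
  (exists p : nat, prime p /\ odd p /\ dvd_card_grouplike (hdual H) p /\
     (forall g alpha, grouplike H g -> has_order H g p ->
        grouplike (hdual H) alpha -> has_order (hdual H) alpha p ->
        hpair alpha g != 1)) ->
  ~ (exists R : tensor2 k n, is_universal_R H R).
Proof.
move=> hH _ centre_Hdual centre_H [p [p_pr [p_odd [[s [s_uniq [s_gl p_dvd]]] no_fixed]]]].
move=> [R [Rinv [R_rinv [R_linv [R_coprod_l [R_coprod_r R_conj]]]]]].
have [a [a_gl a_ord]] := exists_grouplike_of_order hH s_gl p_pr s_uniq p_dvd.
have a_char := grouplike_hchar hH a_gl.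
have g_gl := grouplike_leg_l hH R_rinv R_linv R_coprod_r a_char.
have g_ord := has_order_leg_l hH R_rinv R_linv R_coprod_l R_coprod_r R_conj
  centre_H centre_Hdual a_char a_ord.
have := hpair_leg_l_eq1 hH R_rinv R_linv R_coprod_l R_coprod_r R_conj
  centre_H p_pr p_odd a_char a_ord.
by apply/eqP; exact: no_fixed.
Qed.
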